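(* Let $P,R\in C^1(\mathbb{R},\mathrm{Sym}(n,\mathbb{R}))$, $Q\in C^1(\mathbb{R},\mathrm{Mat}(n,\mathbb{R}))$ satisfy (F2) with constants $C_1,C_2,C_3$. For $\lambda\in\mathbb{R}$ let $B_\lambda(t)=\begin{bmatrix}P^{-1}&-P^{-1}Q\\-Q^TP^{-1}&Q^TP^{-1}Q-R-\lambda I_n\end{bmatrix}(t)$, let $\gamma_{(\tau,\lambda)}$ be the solution of $\dot\gamma=JB_\lambda(t)\gamma$, $\gamma(\tau)=I_{2n}$, and set $E^s_\lambda(\tau)=\{v\in\mathbb{R}^{2n}:\lim_{t\to+\infty}\gamma_{(\tau,\lambda)}(t)v=0\}$, $E^u_\lambda(\tau)=\{v\in\mathbb{R}^{2n}:\lim_{t\to-\infty}\gamma_{(\tau,\lambda)}(t)v=0\}$. Then $E^u_\lambda(-\tau)\cap E^s_\lambda(\tau)=\{0\}$ for all $\tau\ge0$ and all $\lambda\ge\frac{2C_2^2}{C_1}+C_3$.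
   Context: (F2): the limits of $P,Q,R$ as $t\to\pm\infty$ exist and $\langle P(t)v,v\rangle\ge C_1|v|^2$, $|P(t)v|\ge C_1|v|$, $|Q(t)v|\le C_2|v|$, $|R(t)v|\le C_3|v|$ for all $t,v$. $J=\begin{bmatrix}0&-I_n\\ I_n&0\end{bmatrix}$. *)

From HB Require Import structures.
From mathcomp Require Import all_boot all_order all_algebra.
From mathcomp Require Import all_classical all_reals all_analysis.
Set Implicit Arguments. Unset Strict Implicit. Unset Printing Implicit Defensive.
Import Order.TTheory GRing.Theory Num.Theory.
Import numFieldNormedType.Exports.
Local Open Scope ring_scope.
Local Open Scope classical_set_scope.

Definition symmx {R : realType} {n : nat} (A : 'M[R]_n) : Prop := A^T = A.
Definition symmx_fun {R : realType} {n : nat} (f : R -> 'M[R]_n) : Prop :=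
  forall t, symmx (f t).

Definition C1mx {R : realType} {m n : nat} (f : R -> 'M[R]_(m, n)) : Prop :=
  (forall t : R, derivable f t 1) /\ continuous (fun t : R => 'D_1 f t).

Definition dotv {R : realType} {n : nat} (u v : 'cV[R]_n) : R :=
  \sum_(i < n) u i 0 * v i 0.
Definition enorm {R : realType} {n : nat} (v : 'cV[R]_n) : R :=
  Num.sqrt (dotv v v).

Definition F2 {R : realType} {n : nat} (P Q Rm : R -> 'M[R]_n) (C1 C2 C3 : R)
  : Prop :=
  [/\ cvg (P x @[x --> +oo]) /\ cvg (P x @[x --> -oo]),
      cvg (Q x @[x --> +oo]) /\ cvg (Q x @[x --> -oo]),
      cvg (Rm x @[x --> +oo]) /\ cvg (Rm x @[x --> -oo]) &
      forall (t : R) (v : 'cV[R]_n),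
        [/\ dotv (P t *m v) v >= C1 * enorm v ^+ 2,
            enorm (P t *m v) >= C1 * enorm v,
            enorm (Q t *m v) <= C2 * enorm v &
            enorm (Rm t *m v) <= C3 * enorm v]].

Definition Jmx {R : realType} (n : nat) : 'M[R]_(n + n) :=
  block_mx 0 (- 1%:M) 1%:M 0.

Definition Bmx {R : realType} {n : nat} (P Q Rm : R -> 'M[R]_n) (lam t : R)
  : 'M[R]_(n + n) :=
  let Pi := invmx (P t) in
  block_mx Pi (- (Pi *m Q t))
           (- ((Q t)^T *m Pi)) ((Q t)^T *m Pi *m Q t - Rm t - lam%:M).

Definition fundsol {R : realType} {n : nat} (P Q Rm : R -> 'M[R]_n) (lam tau : R)
  (gam : R -> 'M[R]_(n + n)) : Prop :=
  gam tau = 1%:M /\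
  forall t : R, is_derive t 1 gam (Jmx n *m Bmx P Q Rm lam t *m gam t).

Definition Es {R : realType} {n : nat} (gam : R -> 'M[R]_(n + n)) :
  set 'cV[R]_(n + n) :=
  [set v : 'cV[R]_(n + n) | (gam t *m v) @[t --> +oo] --> (0 : 'cV[R]_(n + n))].
Definition Eu {R : realType} {n : nat} (gam : R -> 'M[R]_(n + n)) :
  set 'cV[R]_(n + n) :=
  [set v : 'cV[R]_(n + n) | (gam t *m v) @[t --> -oo] --> (0 : 'cV[R]_(n + n))].

From HB Require Import structures.
From mathcomp Require Import all_boot all_order all_algebra.
From mathcomp Require Import all_classical all_reals all_analysis.
From mathcomp Require Import ring lra.
Import Order.TTheory GRing.Theory Num.Theory.
Import numFieldNormedType.Exports.
Local Open Scope ring_scope.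
Local Open Scope classical_set_scope.

(* Write z = (x, y) for a solution of z' = J B_lam z.  Then x = P y' + Q y and
   x' = Q^T y' + R y + lam y, so that
     <x, y>' = <P y', y'> + 2 <Q y, y'> + <R y, y> + lam |y|^2 >= C1/2 |y'|^2
   as soon as lam >= 2 C2^2/C1 + C3: the pairing <x, y> is nondecreasing along
   solutions.  For v in E^s(tau), the solution through v at time tau tends to 0
   at +oo, hence <x, y>(v) <= 0.  For v in E^u(-tau), the solution through v at
   time -tau tends to 0 at -oo, so <x, y> >= 0 along it; thus <x, y> vanishes
   before -tau, there y' = 0, so y is constant with limit 0, y = 0 and
   x = P y' + Q y = 0.  By continuity v = 0. *)

Section EuclideanInnerProduct.
Context {R : realType} {n : nat}.
Implicit Types (u w : 'cV[R]_n).

Lemma dotvC u w : dotv u w = dotv w u.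
Proof. by apply: eq_bigr => i _; rewrite mulrC. Qed.

Lemma dotvDl u u' w : dotv (u + u') w = dotv u w + dotv u' w.
Proof. by rewrite /dotv -big_split; apply: eq_bigr => i _; rewrite mxE mulrDl. Qed.

Lemma dotvZl a u w : dotv (a *: u) w = a * dotv u w.
Proof. by rewrite /dotv mulr_sumr; apply: eq_bigr => i _; rewrite mxE mulrA. Qed.

Lemma dotv0l w : dotv 0 w = 0.
Proof. by rewrite /dotv big1 // => i _; rewrite mxE mul0r. Qed.

Lemma dotv_trmx_mull (A : 'M[R]_n) u w : dotv (A^T *m u) w = dotv u (A *m w).
Proof.
have dotvE u1 w1 : dotv u1 w1 = (u1^T *m w1) 0 0.
  by rewrite /dotv !mxE; apply: eq_bigr => i _; rewrite mxE.
by rewrite !dotvE trmx_mul trmxK mulmxA.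
Qed.

Lemma dotvv_ge0 u : 0 <= dotv u u.
Proof. by apply: sumr_ge0 => i _; rewrite -expr2 sqr_ge0. Qed.

Lemma enorm_ge0 u : 0 <= enorm u.
Proof. exact: sqrtr_ge0. Qed.

Lemma enorm_sqr u : enorm u ^+ 2 = dotv u u.
Proof. by rewrite /enorm sqr_sqrtr // dotvv_ge0. Qed.

Lemma dotvv_eq0 u : dotv u u = 0 -> u = 0.
Proof.
move=> /eqP; rewrite /dotv psumr_eq0 => [/allP u0|i _]; last first.
  by rewrite -expr2 sqr_ge0.
apply/matrixP => i j; rewrite (ord1 j) mxE.
by have := u0 i (mem_index_enum _); rewrite /= mulf_eq0 orbb => /eqP.
Qed.

Lemma enorm_eq0 u : enorm u = 0 -> u = 0.
Proof. by move=> u0; apply: dotvv_eq0; rewrite -enorm_sqr u0 expr0n. Qed.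

Lemma dotv_ge_enormM u w : - (enorm u * enorm w) <= dotv u w.
Proof.
set a := enorm u; set b := enorm w.
have [a0 b0] : 0 <= a /\ 0 <= b by split; apply: enorm_ge0.
have [ab_gt0|] := ltP 0 (a * b).
  have := dotvv_ge0 (b *: u + a *: w).
  rewrite dotvDl !dotvZl ![dotv _ (_ + _)]dotvC !dotvDl !dotvZl.
  by rewrite [dotv w u]dotvC -!enorm_sqr -/a -/b; nra.
rewrite le_eqVlt ltNge mulr_ge0 // orbF mulf_eq0 => /orP[] /eqP ab0.
  by move: (ab0) => /enorm_eq0 ->; rewrite dotv0l ab0 mul0r oppr0.
by move: (ab0) => /enorm_eq0 ->; rewrite dotvC dotv0l ab0 mulr0 oppr0.
Qed.

Lemma unitmx_of_enorm_lbound (A : 'M[R]_n) c :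
  0 < c -> (forall u, c * enorm u <= enorm (A *m u)) -> A \in unitmx.
Proof.
move=> c_gt0 A_lb; rewrite -unitmx_tr -row_free_unit -kermx_eq0.
apply/rowV0P => r /sub_kermxP rA0; apply: trmx_inj; rewrite trmx0.
apply: enorm_eq0; apply/le_anti; rewrite enorm_ge0 andbT -(pmulr_rle0 _ c_gt0).
have <- : enorm (A *m r^T) = 0.
  by rewrite -[A]trmxK -trmx_mul rA0 trmx0 /enorm dotv0l sqrtr0.
exact: A_lb.
Qed.

End EuclideanInnerProduct.

Definition xy_dot {R : realType} {n : nat} (z : 'cV[R]_(n + n)) : R :=
  dotv (usubmx z) (dsubmx z).

Section HamiltonianVectorField.
Context {R : realType} {n : nat}.
Variables (P Q Rm : R -> 'M[R]_n) (lam t : R).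
Implicit Types (z : 'cV[R]_(n + n)).

Local Notation JB := (Jmx n *m Bmx P Q Rm lam t).

Lemma mul_JBmx z : JB *m z =
  col_mx (- (- ((Q t)^T *m invmx (P t)) *m usubmx z
             + ((Q t)^T *m invmx (P t) *m Q t - Rm t - lam%:M) *m dsubmx z))
         (invmx (P t) *m usubmx z - invmx (P t) *m Q t *m dsubmx z).
Proof.
rewrite /Jmx /Bmx -mulmxA -{1}[z]vsubmxK mul_block_col.
by rewrite (mul_block_col (0 : 'M[R]_n)) !mul0mx !mulNmx !mul1mx add0r addr0.
Qed.

Lemma dsubmx_JBmx z :
  dsubmx (JB *m z) = invmx (P t) *m (usubmx z - Q t *m dsubmx z).
Proof. by rewrite mul_JBmx col_mxKd mulmxBr mulmxA. Qed.

Lemma usubmx_JBmx z : usubmx (JB *m z) =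
  (Q t)^T *m dsubmx (JB *m z) + Rm t *m dsubmx z + lam *: dsubmx z.
Proof.
rewrite dsubmx_JBmx {1}mul_JBmx col_mxKu !mulmxBr !mulmxA !mulNmx !mulmxBl.
rewrite mul_scalar_mx opprD opprK !opprB -!addrA; congr (_ + _).
by rewrite [LHS]addrC [RHS]addrCA addrA.
Qed.

Lemma usubmx_eq_JBmx z : P t \in unitmx ->
  usubmx z = P t *m dsubmx (JB *m z) + Q t *m dsubmx z.
Proof. by move=> Pu; rewrite dsubmx_JBmx mulmxA mulmxV // mul1mx subrK. Qed.

End HamiltonianVectorField.

(* With a = |Y| and b = |Y'| the right-hand side is at least
   C1 b^2 - 2 C2 a b + (lam - C3) a^2, and
   C1 b^2 - 2 C2 a b + 2 C2^2/C1 a^2 - C1/2 b^2 = C1/2 (b - 2 C2/C1 a)^2. *)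
Lemma xy_dot_deriv_lbound {R : realType} {n : nat} {P Q Rm : 'M[R]_n}
    {C1 C2 C3 lam : R} {X Y X' Y' : 'cV[R]_n} :
  0 < C1 -> C1 * enorm Y' ^+ 2 <= dotv (P *m Y') Y' ->
  enorm (Q *m Y) <= C2 * enorm Y -> enorm (Rm *m Y) <= C3 * enorm Y ->
  2 * C2 ^+ 2 / C1 + C3 <= lam ->
  X = P *m Y' + Q *m Y -> X' = Q^T *m Y' + Rm *m Y + lam *: Y ->
  C1 / 2 * dotv Y' Y' <= dotv X' Y + dotv X Y'.
Proof.
move=> C1_gt0 P_lb Q_ub R_ub lam_lb -> ->.
rewrite !dotvDl dotvZl dotv_trmx_mull [dotv Y' (Q *m Y)]dotvC.
set a := enorm Y; set b := enorm Y'.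
have [a0 b0] : 0 <= a /\ 0 <= b by split; apply: enorm_ge0.
have QY_lb := dotv_ge_enormM (Q *m Y) Y'.
have QY_ub : enorm (Q *m Y) * b <= C2 * a * b by apply: ler_wpM2r.
have RY_lb := dotv_ge_enormM (Rm *m Y) Y.
have RY_ub : enorm (Rm *m Y) * a <= C3 * a * a by apply: ler_wpM2r.
rewrite -/a -/b in QY_lb RY_lb P_lb; rewrite -!enorm_sqr -/a -/b.
set k := C2 / C1.
have C2E : C2 = k * C1 by rewrite /k divfK // gt_eqF.
have lamE : 2 * C2 ^+ 2 / C1 + C3 = 2 * k ^+ 2 * C1 + C3.
  by rewrite C2E; field; rewrite gt_eqF.
rewrite lamE in lam_lb; rewrite C2E in QY_ub.
have lam_a : (2 * k ^+ 2 * C1 + C3) * a ^+ 2 <= lam * a ^+ 2.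
  by apply: ler_wpM2r => //; apply: sqr_ge0.
have : 0 <= C1 * (b - 2 * k * a) ^+ 2 by rewrite mulr_ge0 ?sqr_ge0 ?ltW.
nra.
Qed.

Section MatrixDerivative.
Context {R : realType} {V : normedModType R}.

Lemma is_derive_mxP m p (F : V -> 'M[R]_(m, p)) x v dF :
  is_derive x v F dF <-> forall i j, is_derive x v (fun s => F s i j) (dF i j).
Proof.
split=> [[Fd <-] i j | dF_ij].
  have /derivable_mxP/(_ i j) Fij := Fd.
  by apply: DeriveDef => //; rewrite derive_mx // mxE.
have Fd : derivable F x v by apply/derivable_mxP => i j; case: (dF_ij i j).
apply: DeriveDef => //; rewrite derive_mx //.
by apply/matrixP => i j; rewrite mxE; case: (dF_ij i j).
Qed.

Lemma is_derive_mulmxr m p q (F : V -> 'M[R]_(m, p)) (A : 'M[R]_(p, q)) x v dF :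
  is_derive x v F dF -> is_derive x v (fun s => F s *m A) (dF *m A).
Proof.
move=> /is_derive_mxP dF_F; apply/is_derive_mxP => i j.
have -> : (fun s => (F s *m A) i j) = \sum_(k < p) (A k j *: (fun s => F s i k)).
  rewrite fct_sumE; apply/funext => s; rewrite mxE.
  by apply: eq_bigr => k _ /=; rewrite mulrC.
have -> : (dF *m A) i j = \sum_(k < p) A k j *: dF i k.
  by rewrite mxE; apply: eq_bigr => k _; rewrite mulrC.
by apply: is_derive_sum => k; apply: is_deriveZ.
Qed.

End MatrixDerivative.

Section XYDot.
Context {R : realType} {n : nat}.

Lemma xy_dotE (z : 'cV[R]_(n + n)) :
  xy_dot z = \sum_(i < n) z (lshift n i) 0 * z (rshift n i) 0.
Proof. by apply: eq_bigr => i _; rewrite !mxE. Qed.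

Lemma continuous_xy_dot : continuous (@xy_dot R n).
Proof.
rewrite (_ : xy_dot = fun z => \sum_(i < n) z (lshift n i) 0 * z (rshift n i) 0).
  apply: continuous_big => [|i _]; first exact: add_continuous.
  by move=> z; apply: continuousM; apply: coord_continuous.
by apply/funext => z; rewrite xy_dotE.
Qed.

Lemma is_derive_xy_dot {V : normedModType R} {z : V -> 'cV[R]_(n + n)} {x v dz} :
  is_derive x v z dz ->
  is_derive x v (xy_dot \o z)
    (dotv (usubmx dz) (dsubmx (z x)) + dotv (usubmx (z x)) (dsubmx dz)).
Proof.
move=> /is_derive_mxP dz_z.
have -> : xy_dot \o z =
    \sum_(i < n) ((fun s => z s (lshift n i) 0) * (fun s => z s (rshift n i) 0)).
  by rewrite fct_sumE; apply/funext => s; rewrite /= xy_dotE.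
have -> : dotv (usubmx dz) (dsubmx (z x)) + dotv (usubmx (z x)) (dsubmx dz) =
    \sum_(i < n) (z x (lshift n i) 0 *: dz (rshift n i) 0
                  + z x (rshift n i) 0 *: dz (lshift n i) 0).
  by rewrite /dotv -big_split; apply: eq_bigr => i _; rewrite !mxE addrC mulrC.
by apply: is_derive_sum => i; apply: is_deriveM.
Qed.

End XYDot.

Lemma xy_dot_cvg0 {R : realType} {n : nat} {T : Type} (F : set_system T)
    {FF : Filter F} (z : T -> 'cV[R]_(n + n)) :
  z x @[x --> F] --> (0 : 'cV[R]_(n + n)) -> xy_dot (z x) @[x --> F] --> 0.
Proof.
move=> z0; have xy0 : xy_dot (0 : 'cV[R]_(n + n)) = 0.
  by rewrite xy_dotE big1 // => i _; rewrite mxE mul0r.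
by rewrite -xy0; apply: continuous_cvg z0; apply: continuous_xy_dot.
Qed.

Section RealFunctions.
Context {R : realType}.
Implicit Types (f : R -> R) (l a : R).

Lemma nondecreasing_cvgNy_le {f l} :
  {homo f : x y / x <= y} -> f x @[x --> -oo] --> l -> forall t, l <= f t.
Proof.
move=> f_nd fl t; apply: (closed_cvg _ (@closed_le _ (f t)) _ _ fl).
by near=> s; apply: f_nd; near: s; apply: nbhs_ninfty_le; apply: num_real.
Unshelve. all: by end_near.
Qed.

Lemma nondecreasing_cvgy_ge {f l} :
  {homo f : x y / x <= y} -> f x @[x --> +oo] --> l -> forall t, f t <= l.
Proof.
move=> f_nd fl t; apply: (closed_cvg _ (@closed_ge _ (f t)) _ _ fl).
by near=> s; apply: f_nd; near: s; apply: nbhs_pinfty_ge; apply: num_real.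
Unshelve. all: by end_near.
Qed.

Lemma derive0_cvgNy_eq0 f a :
  (forall t, t < a -> is_derive t 1 f 0) -> f x @[x --> -oo] --> 0 ->
  forall t, t < a -> f t = 0.
Proof.
move=> f'0 f0 t ta.
have f_cst s : s <= t -> f s = f t.
  move=> st; have x_lt_a x : x \in `[s, t]%R -> x < a.
    by rewrite in_itv => /andP[_ /le_lt_trans]; apply.
  have f_cont : {within `[s, t], continuous f}.
    apply/continuous_in_subspaceT => x /[1!inE] /x_lt_a /f'0 [+ _].
    by move/derivable1_diffP/differentiable_continuous.
  have f'0_st x : x \in `]s, t[%R -> is_derive x 1 f (cst 0 x).
    by move=> x_st; apply/f'0/x_lt_a/(subset_itv_oo_cc x_st).
  have [c _] := MVT_segment st f'0_st f_cont.
  by rewrite mul0r => /eqP; rewrite subr_eq0 => /eqP.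
have ft : f x @[x --> -oo] --> f t.
  apply: cvg_near_cst; near=> s; apply: f_cst.
  by near: s; apply: nbhs_ninfty_le; apply: num_real.
exact: (cvg_unique _ ft f0).
Unshelve. all: by end_near.
Qed.

End RealFunctions.

Section Trajectory.
Context {R : realType} {n : nat} {P Q Rm : R -> 'M[R]_n} {C1 C2 C3 lam s : R}.
Context {gam : R -> 'M[R]_(n + n)} {v : 'cV[R]_(n + n)}.
Hypotheses (C1_gt0 : 0 < C1) (PQR_F2 : F2 P Q Rm C1 C2 C3).
Hypothesis lam_ge : 2 * C2 ^+ 2 / C1 + C3 <= lam.
Hypothesis gam_sol : fundsol P Q Rm lam s gam.

Local Notation z := (fun t => gam t *m v).
Local Notation dz t := (Jmx n *m Bmx P Q Rm lam t *m (gam t *m v)).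
Local Notation df t := (dotv (usubmx (dz t)) (dsubmx (gam t *m v))
                        + dotv (usubmx (gam t *m v)) (dsubmx (dz t))).

Lemma is_derive_traj (t : R) : is_derive t 1 z (dz t).
Proof. by rewrite mulmxA; apply: is_derive_mulmxr; case: gam_sol. Qed.

Lemma P_unitmx (t : R) : P t \in unitmx.
Proof.
case: PQR_F2 => _ _ _ bounds; apply: (unitmx_of_enorm_lbound _ _ C1_gt0) => u.
by case: (bounds t u).
Qed.

Lemma usubmx_traj (t : R) :
  usubmx (gam t *m v) = P t *m dsubmx (dz t) + Q t *m dsubmx (gam t *m v).
Proof. exact/usubmx_eq_JBmx/P_unitmx. Qed.

Lemma xy_dot_traj_deriv_lbound (t : R) :
  C1 / 2 * dotv (dsubmx (dz t)) (dsubmx (dz t)) <= df t.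
Proof.
case: PQR_F2 => _ _ _ bounds.
have [P_lb _ _ _] := bounds t (dsubmx (dz t)).
have [_ _ Q_ub R_ub] := bounds t (dsubmx (gam t *m v)).
exact: (xy_dot_deriv_lbound C1_gt0 P_lb Q_ub R_ub lam_ge
  (usubmx_traj t) (usubmx_JBmx _ _ _ _ _ _)).
Qed.

Lemma xy_dot_traj_nondecreasing : {homo xy_dot \o z : x y / x <= y}.
Proof.
have f'_f t := is_derive_xy_dot (is_derive_traj t).
move=> x y xy; apply: (ger0_derive1_ndecr _ _ _ (lexx x) xy (lexx y)).
- by move=> t _; case: (f'_f t).
- move=> t _; rewrite derive1E derive_val.
  apply: le_trans (xy_dot_traj_deriv_lbound t).
  by rewrite mulr_ge0 ?dotvv_ge0 ?divr_ge0 ?ltW.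
- apply: continuous_subspaceT => t; case: (f'_f t) => + _.
  by move/derivable1_diffP/differentiable_continuous.
Qed.

Lemma xy_dot_traj_le0 : gam t *m v @[t --> +oo] --> (0 : 'cV[R]_(n + n)) ->
  forall t, xy_dot (gam t *m v) <= 0.
Proof.
move=> z0; apply: (nondecreasing_cvgy_ge xy_dot_traj_nondecreasing).
exact: xy_dot_cvg0.
Qed.

Section UnstableTrajectory.
Context {a : R}.
Hypotheses (z0 : gam t *m v @[t --> -oo] --> (0 : 'cV[R]_(n + n)))
  (xy_dot_a : xy_dot (gam a *m v) <= 0).

Lemma xy_dot_traj_eq0 t : t <= a -> xy_dot (gam t *m v) = 0.
Proof.
move=> ta; apply/le_anti; rewrite (le_trans (xy_dot_traj_nondecreasing _ _ ta)) //=.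
by apply: (nondecreasing_cvgNy_le xy_dot_traj_nondecreasing); apply: xy_dot_cvg0.
Qed.

Lemma dsubmx_dtraj_eq0 t : t < a -> dsubmx (dz t) = 0.
Proof.
move=> ta; have f'0 : is_derive t 1 (xy_dot \o z) 0.
  apply: (near_eq_is_derive (f := cst 0)); near=> x.
  by rewrite /= xy_dot_traj_eq0 // ltW //; near: x; apply: lt_nbhsl.
have df0 : df t = 0.
  by have [_ <-] := is_derive_xy_dot (is_derive_traj t); case: f'0.
apply: dotvv_eq0; apply/le_anti; rewrite dotvv_ge0 andbT.
by have := xy_dot_traj_deriv_lbound t; rewrite df0 pmulr_rle0 // divr_gt0.
Unshelve. all: by end_near.
Qed.

Lemma traj_eq0_before t : t < a -> gam t *m v = 0.
Proof.
have dsub0 x : x < a -> dsubmx (gam x *m v) = 0.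
  move=> xa; apply/matrixP => i j; rewrite [LHS]mxE [RHS]mxE.
  apply: (derive0_cvgNy_eq0 (fun y => (gam y *m v) (rshift n i) j) a) => // [y ya|].
    have /is_derive_mxP/(_ (rshift n i) j) := is_derive_traj y.
    by rewrite -[dz y]vsubmxK dsubmx_dtraj_eq0 // col_mxEd mxE.
  have := cvg_comp _ _ z0 (@coord_continuous R (n + n) 1 (rshift n i) j 0).
  by rewrite mxE.
move=> ta; rewrite -[gam t *m v]vsubmxK usubmx_traj dsubmx_dtraj_eq0 // dsub0 //.
by rewrite !mulmx0 addr0 col_mx0.
Qed.

Lemma traj_eq0 : gam a *m v = 0.
Proof.
have za : z x @[x --> a^'-] --> gam a *m v.
  apply: cvg_at_left_filter; case: (is_derive_traj a) => + _.
  by move/derivable1_diffP/differentiable_continuous.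
have z0_left : z x @[x --> a^'-] --> (0 : 'cV[R]_(n + n)).
  apply: cvg_near_cst; near=> x; apply: traj_eq0_before.
  by near: x; apply: nbhs_left_lt.
exact: (cvg_unique _ za z0_left).
Unshelve. all: by end_near.
Qed.

End UnstableTrajectory.

End Trajectory.

Theorem lemma3p8 (R : realType) (n : nat) (P Q Rm : R -> 'M[R]_n)
  (C1 C2 C3 : R) :
  symmx_fun P -> symmx_fun Rm -> C1mx P -> C1mx Q -> C1mx Rm ->
  0 < C1 -> F2 P Q Rm C1 C2 C3 ->
  forall (tau lam : R), 0 <= tau -> lam >= 2 * C2 ^+ 2 / C1 + C3 ->
  forall gm gp : R -> 'M[R]_(n + n),
    fundsol P Q Rm lam (- tau) gm -> fundsol P Q Rm lam tau gp ->
    Eu gm `&` Es gp = [set 0].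
Proof.
move=> _ _ _ _ _ C1_gt0 PQR_F2 tau lam _ lam_ge gm gp gm_sol gp_sol.
apply/seteqP; split => [v [/= v_u v_s] | _ ->]; last first.
  by split; apply: cvg_near_cst; near=> t; rewrite mulmx0.
have xy_dot_v : xy_dot v <= 0.
  have := xy_dot_traj_le0 C1_gt0 PQR_F2 lam_ge gp_sol v_s tau.
  by rewrite gp_sol.1 mul1mx.
have := traj_eq0 C1_gt0 PQR_F2 lam_ge gm_sol (a := - tau) v_u.
by rewrite gm_sol.1 mul1mx => /(_ xy_dot_v).
Unshelve. all: by end_near.
Qed.
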